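(* If $\Gamma$ is well-formed and $\Gamma \vdash t:A$ is derivable in $\mathcal{T}'$, then $\Gamma \vdash t:A$ is derivable in $\mathcal{T}$.
   Context: Fix a (functional) Pure type system: a set $\mathcal{S}$ of sorts, for each sort $s$ an infinite set $\mathcal{V}_s$ of variables (pairwise disjoint), a functional relation $\mathcal{A}\subseteq \mathcal{S}\times\mathcal{S}$ (axioms) and a functional relation $\mathcal{R}\subseteq\mathcal{S}\times\mathcal{S}\times\mathcal{S}$ (rules). Terms are $t ::= x \mid s \mid (x:A)\rightarrow B \mid \lambda x:A\,t \mid t\,u$, and $\equiv$ denotes ($\beta$-)conversion. A context is a finite sequence $x_1:A_1,\dots,x_n:A_n$ with pairwise distinct variables. The usual system $\mathcal{T}$ has the rules: (sort) $\vdash s_1:s_2$ for $\langle s_1,s_2\rangle\in\mathcal{A}$ (empty context); (start) from $\Gamma\vdash A:s$ infer $\Gamma,x:A\vdash x:A$ for $x\in\mathcal{V}_s$; (weak) from $\Gamma\vdash t:A$ and $\Gamma\vdash B:s$ infer $\Gamma,x:B\vdash t:A$ for $x\in\mathcal{V}_s$; (prod) from $\Gamma\vdash A:s_1$ and $\Gamma,x:A\vdash B:s_2$ infer $\Gamma\vdash (x:A)\rightarrow B:s_3$ for $\langle s_1,s_2,s_3\rangle\in\mathcal{R}$; (abs) from $\Gamma\vdash A:s_1$, $\Gamma,x:A\vdash B:s_2$ and $\Gamma,x:A\vdash t:B$ infer $\Gamma\vdash\lambda x:A\,t:(x:A)\rightarrow B$ for $\langle s_1,s_2,s_3\rangle\in\mathcal{R}$;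 (app) from $\Gamma\vdash t:(x:A)\rightarrow B$ and $\Gamma\vdash u:A$ infer $\Gamma\vdash t\,u:(u/x)B$; (conv) from $\Gamma\vdash t:A$ and $\Gamma\vdash B:s$ infer $\Gamma\vdash t:B$ when $A\equiv B$. The system $\mathcal{T}'$ has the rules (prod), (abs), (app), (conv) as in $\mathcal{T}$ together with: (sort') $\Gamma\vdash s_1:s_2$ for any context $\Gamma$ and $\langle s_1,s_2\rangle\in\mathcal{A}$; (var') from $\Gamma,x:A,\Gamma'\vdash A:s$ infer $\Gamma,x:A,\Gamma'\vdash x:A$ for $x\in\mathcal{V}_s$; there is no weakening rule. Well-formed contexts are defined inductively: the empty context is well-formed, and if $\Gamma$ is well-formed and $\Gamma\vdash A:s$ is derivable in $\mathcal{T}$ for some sort $s$, then $\Gamma,x:A$ is well-formed.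
   Formalization: In the definition of well-formed contexts, Γ,x:A is well-formed only when x ∈ $\mathcal{V}_s$ for the sort s with Γ ⊢ A:s derivable in $\mathcal{T}$, rather than for any variable x. The statement above fails without it. *)

(* Pure type systems in locally nameless representation:
   free variables are named (elements of [var]), bound variables are
   de Bruijn indices, so terms are identified up to alpha-conversion. *)
From Stdlib Require Import List Relations.
Import ListNotations.

Section PTS.

Variables (sort var : Type).

Inductive term : Type :=
| tSort (s : sort)
| tVar (x : var)
| tBvar (n : nat)
| tPi (A B : term)             (* (x:A) -> B, B the body with x bound *)
| tLam (A t : term)
| tApp (t u : term).

Fixpoint open_rec (k : nat) (u t : term) : term :=
  match t with
  | tSort s => tSort s
  | tVar x => tVar x
  | tBvar n => if Nat.eqb n k then u else tBvar n
  | tPi A B => tPi (open_rec k u A) (open_rec (Datatypes.S k) u B)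
  | tLam A b => tLam (open_rec k u A) (open_rec (Datatypes.S k) u b)
  | tApp a b => tApp (open_rec k u a) (open_rec k u b)
  end.

(* [open B u] is the substitution (u/x)B of the named presentation,
   where x is the variable bound in (x:A)->B or \x:A. B. *)
Definition open (t u : term) : term := open_rec 0 u t.

Fixpoint fv (t : term) : list var :=
  match t with
  | tSort _ => []
  | tVar x => [x]
  | tBvar _ => []
  | tPi A B => fv A ++ fv B
  | tLam A b => fv A ++ fv b
  | tApp a b => fv a ++ fv b
  end.

Fixpoint lc_at (k : nat) (t : term) : Prop :=
  match t with
  | tSort _ => True
  | tVar _ => True
  | tBvar n => n < k
  | tPi A B => lc_at k A /\ lc_at (Datatypes.S k) B
  | tLam A b => lc_at k A /\ lc_at (Datatypes.S k) b
  | tApp a b => lc_at k a /\ lc_at k b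
  end.

Inductive beta : term -> term -> Prop :=
| beta_redex A t u :
    lc_at 0 A -> lc_at 1 t -> lc_at 0 u ->
    beta (tApp (tLam A t) u) (open t u)
| beta_app1 t t' u : beta t t' -> lc_at 0 u -> beta (tApp t u) (tApp t' u)
| beta_app2 t u u' : lc_at 0 t -> beta u u' -> beta (tApp t u) (tApp t u')
| beta_pi1 A A' B : beta A A' -> lc_at 1 B -> beta (tPi A B) (tPi A' B)
| beta_pi2 A B B' x :
    lc_at 0 A -> ~ In x (fv B) -> ~ In x (fv B') ->
    beta (open B (tVar x)) (open B' (tVar x)) -> beta (tPi A B) (tPi A B')
| beta_lam1 A A' t : beta A A' -> lc_at 1 t -> beta (tLam A t) (tLam A' t)
| beta_lam2 A t t' x :
    lc_at 0 A -> ~ In x (fv t) -> ~ In x (fv t') ->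
    beta (open t (tVar x)) (open t' (tVar x)) -> beta (tLam A t) (tLam A t').

Definition conv : term -> term -> Prop := clos_refl_sym_trans term beta.

(* contexts: the list is stored in reverse, so the context
   x1:A1,...,xn:An is [(xn,An); ...; (x1,A1)], and  Gamma, x:A  is
   (x,A) :: Gamma;  Gamma, x:A, Gamma'  is  Gamma' ++ (x,A) :: Gamma. *)
Definition ctx : Type := list (var * term).
Definition dom (G : ctx) : list var := map fst G.
Definition is_context (G : ctx) : Prop := NoDup (dom G).

Variable vsort : var -> sort.           (* x \in V_s  <->  vsort x = s *)
Variable ax : sort -> sort -> Prop.
Variable rl : sort -> sort -> sort -> Prop.

Inductive typT : ctx -> term -> term -> Prop :=
| T_sort s1 s2 : ax s1 s2 -> typT [] (tSort s1) (tSort s2)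
| T_start G A s x :
    typT G A (tSort s) -> vsort x = s -> ~ In x (dom G) ->
    typT ((x, A) :: G) (tVar x) A
| T_weak G t A B s x :
    typT G t A -> typT G B (tSort s) -> vsort x = s -> ~ In x (dom G) ->
    typT ((x, B) :: G) t A
| T_prod G A B s1 s2 s3 x :
    typT G A (tSort s1) ->
    typT ((x, A) :: G) (open B (tVar x)) (tSort s2) ->
    ~ In x (dom G) -> ~ In x (fv B) -> rl s1 s2 s3 ->
    typT G (tPi A B) (tSort s3)
| T_abs G A B t s1 s2 s3 x :
    typT G A (tSort s1) ->
    typT ((x, A) :: G) (open B (tVar x)) (tSort s2) ->
    typT ((x, A) :: G) (open t (tVar x)) (open B (tVar x)) ->
    ~ In x (dom G) -> ~ In x (fv B) -> ~ In x (fv t) -> rl s1 s2 s3 ->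
    typT G (tLam A t) (tPi A B)
| T_app G t u A B :
    typT G t (tPi A B) -> typT G u A -> typT G (tApp t u) (open B u)
| T_conv G t A B s :
    typT G t A -> typT G B (tSort s) -> conv A B -> typT G t B.

(* The system T' (no weakening, sort' and var' instead of sort/start) *)
Inductive typT' : ctx -> term -> term -> Prop :=
| T'_sort G s1 s2 : is_context G -> ax s1 s2 -> typT' G (tSort s1) (tSort s2)
| T'_var G G' x A s :
    typT' (G' ++ (x, A) :: G) A (tSort s) -> vsort x = s ->
    typT' (G' ++ (x, A) :: G) (tVar x) A
| T'_prod G A B s1 s2 s3 x :
    typT' G A (tSort s1) ->
    typT' ((x, A) :: G) (open B (tVar x)) (tSort s2) ->
    ~ In x (dom G) -> ~ In x (fv B) -> rl s1 s2 s3 ->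
    typT' G (tPi A B) (tSort s3)
| T'_abs G A B t s1 s2 s3 x :
    typT' G A (tSort s1) ->
    typT' ((x, A) :: G) (open B (tVar x)) (tSort s2) ->
    typT' ((x, A) :: G) (open t (tVar x)) (open B (tVar x)) ->
    ~ In x (dom G) -> ~ In x (fv B) -> ~ In x (fv t) -> rl s1 s2 s3 ->
    typT' G (tLam A t) (tPi A B)
| T'_app G t u A B :
    typT' G t (tPi A B) -> typT' G u A -> typT' G (tApp t u) (open B u)
| T'_conv G t A B s :
    typT' G t A -> typT' G B (tSort s) -> conv A B -> typT' G t B.

Inductive wf : ctx -> Prop :=
| wf_nil : wf []
| wf_cons G x A s :
    wf G -> typT G A (tSort s) -> vsort x = s -> ~ In x (dom G) ->
    wf ((x, A) :: G).

End PTS.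

Arguments tSort {sort var}.
Arguments tVar {sort var}.
Arguments tBvar {sort var}.
Arguments tPi {sort var}.
Arguments tLam {sort var}.
Arguments tApp {sort var}.
Arguments typT {sort var}.
Arguments typT' {sort var}.
Arguments wf {sort var}.

From Stdlib Require Import List Relations ClassicalEpsilon.

(* Induction on the T' derivation proves a stronger statement: if a renaming
   f of variables sends every declaration z : B of Gamma to a T-derivable
   judgement Delta |- f z : f B in a well-formed Delta, then
   Delta |- f t : f A in T.  The rules (sort') and (var') then become
   weakenings of (sort) and (start) inside Delta.  The renaming is what makes
   the binder rules go through: the variable x bound by a (prod)/(abs)
   premise of T' need neither be fresh for Delta nor lie in V_s1, as T
   requires for extending Delta by x : A, so it is replaced by a fresh y in
   V_s1; renamings preserve beta-conversion.  Taking f = id and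
   Delta = Gamma gives the theorem. *)

Arguments open_rec {sort var}.
Arguments open {sort var}.
Arguments fv {sort var}.
Arguments lc_at {sort var}.
Arguments beta {sort var}.
Arguments conv {sort var}.
Arguments dom {sort var}.

Section Renaming.

Variables (sort var : Type) (vsort : var -> sort).
Hypothesis fresh_in_sort :
  forall (s : sort) (l : list var), exists x, vsort x = s /\ ~ In x l.

Notation tm := (term sort var).

Fixpoint ren (f : var -> var) (t : tm) : tm :=
  match t with
  | tSort s => tSort s
  | tVar x => tVar (f x)
  | tBvar n => tBvar n
  | tPi A B => tPi (ren f A) (ren f B)
  | tLam A b => tLam (ren f A) (ren f b)
  | tApp a b => tApp (ren f a) (ren f b)
  end.

Lemma ren_open_rec f u (t : tm) k :
  ren f (open_rec k u t) = open_rec k (ren f u) (ren f t).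
Proof.
  revert k; induction t; intros k; simpl; try congruence.
  destruct (Nat.eqb n k); reflexivity.
Qed.

Lemma ren_ext f g (t : tm) :
  (forall w, In w (fv t) -> f w = g w) -> ren f t = ren g t.
Proof.
  induction t; simpl; intros Hfg; f_equal;
    auto using in_or_app, in_eq.
Qed.

Lemma ren_id (t : tm) : ren (fun x => x) t = t.
Proof. induction t; simpl; congruence. Qed.

Lemma lc_at_ren f (t : tm) k : lc_at k t -> lc_at k (ren f t).
Proof. revert k; induction t; simpl; intuition. Qed.

Lemma fv_open_rec (t : tm) u k w : In w (fv t) -> In w (fv (open_rec k u t)).
Proof.
  revert k; induction t; simpl; intros k Hw; rewrite ?in_app_iff in *;
    intuition.
Qed.

(* [var] has no decidable equality, hence the classical test. *)
Definition upd (f : var -> var) x y : var -> var :=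
  fun z => if excluded_middle_informative (z = x) then y else f z.

Lemma upd_eq f x y : upd f x y x = y.
Proof. unfold upd; destruct excluded_middle_informative; congruence. Qed.

Lemma upd_neq f x y z : z <> x -> upd f x y z = f z.
Proof. unfold upd; destruct excluded_middle_informative; congruence. Qed.

Lemma ren_upd_fresh f x y (B : tm) : ~ In x (fv B) -> ren (upd f x y) B = ren f B.
Proof.
  intros Hx; apply ren_ext; intros w Hw.
  apply upd_neq; intros ->; contradiction.
Qed.

Lemma ren_upd_open f x y (B : tm) : ~ In x (fv B) ->
  ren (upd f x y) (open B (tVar x)) = open (ren f B) (tVar y).
Proof.
  intros Hx; unfold open; rewrite ren_open_rec; simpl.
  now rewrite upd_eq, ren_upd_fresh.
Qed.

Lemma beta_ren (a b : tm) f : beta a b -> beta (ren f a) (ren f b).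
Proof.
  intros Hab; revert f; induction Hab; intros f; simpl;
    try (constructor; auto using lc_at_ren; fail).
  - unfold open; rewrite ren_open_rec.
    apply beta_redex; auto using lc_at_ren.
  - destruct (fresh_in_sort (vsort x) (fv (ren f B) ++ fv (ren f B')))
      as [y [_ Hy]]; rewrite in_app_iff in Hy.
    apply beta_pi2 with y; auto using lc_at_ren.
    rewrite <- !(ren_upd_open f x y) by assumption; apply IHHab.
  - destruct (fresh_in_sort (vsort x) (fv (ren f t) ++ fv (ren f t')))
      as [y [_ Hy]]; rewrite in_app_iff in Hy.
    apply beta_lam2 with y; auto using lc_at_ren.
    rewrite <- !(ren_upd_open f x y) by assumption; apply IHHab.
Qed.

Lemma conv_ren (a b : tm) f : conv a b -> conv (ren f a) (ren f b).
Proof.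
  induction 1.
  - apply rst_step, beta_ren; assumption.
  - apply rst_refl.
  - apply rst_sym; assumption.
  - eapply rst_trans; eassumption.
Qed.

End Renaming.

Arguments ren {sort var}.
Arguments upd {var}.

Section Typing.

Variables (sort var : Type) (vsort : var -> sort)
  (ax : sort -> sort -> Prop) (rl : sort -> sort -> sort -> Prop).
Hypothesis fresh_in_sort :
  forall (s : sort) (l : list var), exists x, vsort x = s /\ ~ In x l.

Notation tm := (term sort var).
Notation typT := (typT vsort ax rl).
Notation typT' := (typT' vsort ax rl).
Notation wf := (wf vsort ax rl).

Lemma typT'_fv G (t T : tm) : typT' G t T -> forall w, In w (fv t) -> In w (dom G).
Proof.
  induction 1; simpl; intros w Hw; rewrite ?in_app_iff in Hw; 
    try solve [intuition eauto].
  - destruct Hw as [<- | []].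
    unfold dom; rewrite map_app, in_app_iff; simpl; auto.
  - destruct Hw as [Hw | Hw]; auto.
    destruct (IHtypT'2 w (fv_open_rec _ _ _ _ _ _ Hw)) as [<- | ?]; tauto.
  - destruct Hw as [Hw | Hw]; auto.
    destruct (IHtypT'3 w (fv_open_rec _ _ _ _ _ _ Hw)) as [<- | ?]; tauto.
Qed.

Lemma typT_fv G (t T : tm) : typT G t T -> forall w, In w (fv t) -> In w (dom G).
Proof.
  induction 1; simpl; intros w Hw; rewrite ?in_app_iff in Hw; 
    try solve [intuition eauto].
  - destruct Hw as [Hw | Hw]; auto.
    destruct (IHtypT2 w (fv_open_rec _ _ _ _ _ _ Hw)) as [<- | ?]; tauto.
  - destruct Hw as [Hw | Hw]; auto.
    destruct (IHtypT3 w (fv_open_rec _ _ _ _ _ _ Hw)) as [<- | ?]; tauto.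
Qed.

Definition ctx_scoped (G : ctx sort var) : Prop :=
  forall z B, In (z, B) G -> forall w, In w (fv B) -> In w (dom G).

Lemma ctx_scoped_cons G x (A : tm) : ctx_scoped G ->
  (forall w, In w (fv A) -> In w (dom G)) -> ctx_scoped ((x, A) :: G).
Proof.
  intros HG HA z B [[= <- <-] | HzB] w Hw; right; eauto.
Qed.

Lemma wf_scoped G : wf G -> ctx_scoped G.
Proof.
  induction 1.
  - intros z B [].
  - apply ctx_scoped_cons; eauto using typT_fv.
Qed.

Lemma wf_typT_var G z B : wf G -> In (z, B) G -> typT G (tVar z) B.
Proof.
  induction 1 as [|G x A s HG IH HA Hx Hfresh]; intros HzB; [destruct HzB|].
  destruct HzB as [[= <- <-] | HzB].
  - eapply T_start; eassumption.
  - eapply T_weak; eauto.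
Qed.

Lemma wf_typT_sort G s1 s2 : wf G -> ax s1 s2 -> typT G (tSort s1) (tSort s2).
Proof.
  induction 1; intros.
  - apply T_sort; assumption.
  - eapply T_weak; eauto.
Qed.

Definition typed_renaming (f : var -> var) (G D : ctx sort var) : Prop :=
  forall z B, In (z, B) G -> typT D (tVar (f z)) (ren f B).

Lemma typed_renaming_fresh_cons G D f x (A : tm) s (l : list var) :
  wf D -> ctx_scoped G -> (forall w, In w (fv A) -> In w (dom G)) ->
  ~ In x (dom G) -> typed_renaming f G D -> typT D (ren f A) (tSort s) ->
  exists y, ~ In y l /\ ~ In y (dom D) /\ wf ((y, ren f A) :: D) /\
    typed_renaming (upd f x y) ((x, A) :: G) ((y, ren f A) :: D).
Proof.
  intros HD HG HA Hx Hf HfA.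
  destruct (fresh_in_sort s (l ++ dom D)) as [y [Hy Hyl]].
  rewrite in_app_iff in Hyl.
  exists y; repeat split; try tauto.
  - apply wf_cons with s; tauto.
  - intros z B [[= <- <-] | HzB].
    + rewrite upd_eq, ren_upd_fresh by auto.
      apply T_start with s; tauto.
    + assert (Hzx : z <> x) by (intros ->; apply Hx, (in_map fst G (x, B)), HzB).
      assert (HxB : ~ In x (fv B)) by (intro; apply Hx; eapply HG; eassumption).
      rewrite upd_neq, ren_upd_fresh by assumption.
      apply T_weak with s; auto; tauto.
Qed.

Lemma typT'_ren G (t T : tm) : typT' G t T -> ctx_scoped G ->
  forall f D, wf D -> typed_renaming f G D -> typT D (ren f t) (ren f T).
Proof.
  induction 1 as [G s1 s2 _ Hax | G G' x A s _ _ _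
                 | G A B s1 s2 s3 x HA IHA _ IHB Hx HxB Hrl
                 | G A B t s1 s2 s3 x HA IHA _ IHB _ IHt Hx HxB Hxt Hrl
                 | G t u A B _ IHt _ IHu | G t A B s _ IHt _ IHB HAB];
    intros HG f D HD Hf; simpl.
  - apply wf_typT_sort; assumption.
  - apply Hf, in_or_app; right; left; reflexivity.
  - specialize (IHA HG f D HD Hf); simpl in IHA.
    assert (HAfv := typT'_fv _ _ _ HA).
    destruct (typed_renaming_fresh_cons G D f x A s1 (fv (ren f B))
                HD HG HAfv Hx Hf IHA) as (y & HyB & HyD & HDA & HfA).
    specialize (IHB (ctx_scoped_cons G x A HG HAfv) _ _ HDA HfA).
    rewrite ren_upd_open in IHB by assumption.
    apply T_prod with s1 s2 y; assumption.
  - specialize (IHA HG f D HD Hf); simpl in IHA.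
    assert (HAfv := typT'_fv _ _ _ HA).
    destruct (typed_renaming_fresh_cons G D f x A s1 (fv (ren f B) ++ fv (ren f t))
                HD HG HAfv Hx Hf IHA) as (y & Hyl & HyD & HDA & HfA).
    rewrite in_app_iff in Hyl.
    assert (HGA := ctx_scoped_cons G x A HG HAfv).
    specialize (IHB HGA _ _ HDA HfA); specialize (IHt HGA _ _ HDA HfA).
    rewrite ren_upd_open in IHB, IHt by assumption.
    rewrite ren_upd_open in IHt by assumption.
    apply T_abs with s1 s2 s3 y; tauto.
  - unfold open; rewrite ren_open_rec.
    apply T_app with (ren f A); auto.
  - apply T_conv with (ren f A) s; [apply IHt | apply IHB | ]; try assumption.
    apply (conv_ren _ _ vsort fresh_in_sort); assumption.
Qed.

End Typing.

Theorem mainTheorem5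
  (sort var : Type) (vsort : var -> sort)
  (ax : sort -> sort -> Prop) (rl : sort -> sort -> sort -> Prop)
  (* each V_s is infinite *)
  (Vinf : forall (s : sort) (l : list var), exists x, vsort x = s /\ ~ In x l)
  (* functional PTS *)
  (ax_fun : forall s s1 s2, ax s s1 -> ax s s2 -> s1 = s2)
  (rl_fun : forall s1 s2 s3 s3', rl s1 s2 s3 -> rl s1 s2 s3' -> s3 = s3')
  (G : ctx sort var) (t A : term sort var) :
  wf vsort ax rl G -> typT' vsort ax rl G t A -> typT vsort ax rl G t A.
Proof.
  intros HG Ht.
  rewrite <- (ren_id _ _ t), <- (ren_id _ _ A).
  apply (typT'_ren sort var vsort ax rl Vinf G t A Ht (wf_scoped _ _ _ _ _ _ HG)
           (fun x => x) G HG).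
  intros z B HzB; rewrite ren_id; apply wf_typT_var; assumption.
Qed.
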